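(* For every countable ordinal $\beta\ge1$ and every finite $m\ge1$, the linear order $\omega^\beta\cdot m$ (ordinal exponentiation and multiplication) satisfies $\mathsf{rk}(\omega^\beta\cdot m)=\omega\cdot\beta+\lfloor\log_2 m\rfloor$.
   Context: An ordinal is regarded as the linear order $(\alpha,\in)$. Let $\mathcal F$ be the class of finite linear orders (language $\{<\}$); countable linear orders are the structures considered; substructures are suborders and $\mathsf{age}(X)$ is the set of finite suborders of $X$. For $A\le B$, $B$ is a prime extension of $A$ if $|B\setminus A|=1$; a realization of $B$ in $X$ (where $A\le X$) is $C\le X$ with $A\le C$ and an order-isomorphism $B\to C$ fixing $A$ pointwise. For $F\in\mathsf{age}(X)$ define by recursion: $\mathsf{rk}_X(F)\ge0$ always; $\mathsf{rk}_X(F)\ge\gamma+1$ iff every prime extension $B\in\mathcal F$ of $F$ has a realization $C$ in $X$ with $\mathsf{rk}_X(C)\ge\gamma$; for limit $\gamma$, $\mathsf{rk}_X(F)\ge\gamma$ iff $\mathsf{rk}_X(F)\ge\delta$ for all $\delta<\gamma$. $\mathsf{rk}_X(F)=\sup\{\gamma:\mathsf{rk}_X(F)\ge\gamma\}$ (or $\infty$ if this holds for all ordinals), and $\mathsf{rk}(X)=\mathsf{rk}_X(\emptyset)$. *)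

(* Countable linear orders are given as a carrier type with a
   strict order relation (in Prop); ordinals are given as well-orders. *)
From Stdlib Require Import Arith List.
Import ListNotations.

Definition strict_total_order {T : Type} (lt : T -> T -> Prop) : Prop :=
  (forall x, ~ lt x x) /\
  (forall x y z, lt x y -> lt y z -> lt x z) /\
  (forall x y, x = y \/ lt x y \/ lt y x).

Definition countable_type (T : Type) : Prop :=
  exists f : T -> nat, forall x y, f x = f y -> x = y.

Definition pts {X : Type} (F : list X) := { x : X | In x F }.

(* A prime extension B of the finite suborder F: carrier [option (pts F)],
   where [None] is the single new point, [Some a] is the point a of F;
   B is a (finite) strict linear order whose restriction to F is the order of X. *)
Definition prime_ext {X : Type} (ltX : X -> X -> Prop) (F : list X)
  (R : option (pts F) -> option (pts F) -> Prop) : Prop :=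
  strict_total_order R /\
  (forall a b : pts F, R (Some a) (Some b) <-> ltX (proj1_sig a) (proj1_sig b)).

(* x realizes B in X: C := x :: F is a suborder of X containing F, and the map
   None |-> x, Some a |-> a is an order-isomorphism B -> C fixing F pointwise. *)
Definition realizes {X : Type} (ltX : X -> X -> Prop) (F : list X)
  (R : option (pts F) -> option (pts F) -> Prop) (x : X) : Prop :=
  ~ In x F /\
  (forall a : pts F,
     (R None (Some a) <-> ltX x (proj1_sig a)) /\
     (R (Some a) None <-> ltX (proj1_sig a) x)).

Definition succ_of {W : Type} (ltW : W -> W -> Prop) (v w : W) : Prop :=
  ltW v w /\ forall u, ~ (ltW v u /\ ltW u w).

Definition is_limit {W : Type} (ltW : W -> W -> Prop) (w : W) : Prop :=
  (exists v, ltW v w) /\ ~ (exists v, succ_of ltW v w).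

(* rkge ltX ltW F w  :<->  rk_X(F) >= (order type of the initial segment of W below w).
   0: always; successor w = v+1: every prime extension has a realization C with
   rk_X(C) >= v; limit w: rk_X(F) >= v for all v < w. *)
Inductive rkge {X : Type} (ltX : X -> X -> Prop) {W : Type} (ltW : W -> W -> Prop)
  : list X -> W -> Prop :=
| rkge_intro (F : list X) (w : W) :
    (forall v, succ_of ltW v w ->
       forall R, prime_ext ltX F R ->
         exists x, realizes ltX F R x /\ rkge ltX ltW (x :: F) v) ->
    (is_limit ltW w -> forall v, ltW v w -> rkge ltX ltW F v) ->
    rkge ltX ltW F w.

Definition rank_eq {X : Type} (ltX : X -> X -> Prop) {W : Type} (ltW : W -> W -> Prop)
  (w : W) : Prop :=
  rkge ltX ltW [] w /\ forall v, ltW w v -> ~ rkge ltX ltW [] v.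

Definition fin_supp {T : Type} (f : T -> nat) : Prop :=
  exists l : list T, forall t, f t <> 0 -> In t l.

(* omega^beta = finitely supported functions beta -> omega, compared at the
   largest point where they differ. *)
Definition antilex_lt {T : Type} (ltT : T -> T -> Prop) (f g : T -> nat) : Prop :=
  exists t, f t < g t /\ forall s, ltT t s -> f s = g s.

(* omega^beta * m = m consecutive copies of omega^beta (copy index major). *)
Definition OPM (T : Type) (m : nat) : Type :=
  { p : nat * (T -> nat) | fst p < m /\ fin_supp (snd p) }.

Definition opm_lt {T : Type} (ltT : T -> T -> Prop) (m : nat) (x y : OPM T m) : Prop :=
  let (i, f) := proj1_sig x in
  let (j, g) := proj1_sig y in
  i < j \/ (i = j /\ antilex_lt ltT f g).

(* inl (t, n): position omega*t + n (beta copies of omega, copy index major);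
   inr k: position omega*beta + k. *)
Definition OW (T : Type) : Type := ((T * nat) + nat)%type.

Definition ow_lt {T : Type} (ltT : T -> T -> Prop) (a b : OW T) : Prop :=
  match a, b with
  | inl (t, n), inl (t', n') => ltT t t' \/ (t = t' /\ n < n')
  | inl _, inr _ => True
  | inr _, inl _ => False
  | inr k, inr k' => k < k'
  end.

(* Embed [ω^β·m] in the finitely supported maps [β + 1 -> ℤ], ordered antilexicographically
   (coordinate [β] holding the copy index), and add endpoints [Bot] and [Top].  Give a gap
   [lo < hi] between consecutive points of [F ∪ {Bot, Top}] the rank [ω·d + ⌊log₂ c⌋], where [d]
   is the top coordinate at which [lo] and [hi] differ and [c = hi(d) - lo(d)].  Inserting a
   point into a gap always lowers the rank of one of the two halves, while a gap of rank [> u]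
   can be split into two gaps of rank [≥ u].  By induction on [w], these two facts show that
   [rk_X(F) ≥ w] iff all gaps of [F] have rank [≥ w]; for [F = ∅] the only gap is [(Bot, Top)],
   of rank [ω·β + ⌊log₂ m⌋]. *)

From Stdlib Require Import Arith List ZArith Lia Classical ClassicalEpsilon
  FunctionalExtensionality ProofIrrelevance.
Import ListNotations.

Notation dec := excluded_middle_informative.

Section StrictTotalOrder.
Context {A : Type} {lt : A -> A -> Prop} (Hlt : strict_total_order lt).

Lemma sto_irrefl x : ~ lt x x.
Proof. apply Hlt. Qed.

Lemma sto_trans x y z : lt x y -> lt y z -> lt x z.
Proof. apply Hlt. Qed.

Lemma sto_total x y : x = y \/ lt x y \/ lt y x.
Proof. apply Hlt. Qed.

Lemma sto_asym x y : lt x y -> ~ lt y x.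
Proof. intros Hxy Hyx; exact (sto_irrefl x (sto_trans _ _ _ Hxy Hyx)). Qed.

Lemma sto_flip : strict_total_order (fun x y => lt y x).
Proof.
  split; [|split]; intros *; [apply sto_irrefl|eauto using sto_trans|].
  destruct (sto_total x y) as [|[|]]; auto.
Qed.

Lemma sto_le_lt_trans x y z : x = y \/ lt x y -> lt y z -> lt x z.
Proof. intros [->|Hxy] Hyz; eauto using sto_trans. Qed.

Lemma sto_lt_le_trans x y z : lt x y -> y = z \/ lt y z -> lt x z.
Proof. intros Hxy [<-|Hyz]; eauto using sto_trans. Qed.

Lemma sto_le_antisym x y : x = y \/ lt x y -> y = x \/ lt y x -> x = y.
Proof. intros [|Hxy] [|Hyx]; auto. exfalso; exact (sto_asym _ _ Hxy Hyx). Qed.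

Lemma list_max_sat (P : A -> Prop) (l : list A) :
  (forall x, In x l -> ~ P x) \/
  exists x, In x l /\ P x /\ forall y, In y l -> P y -> y = x \/ lt y x.
Proof.
  induction l as [|a l [IH|[x [Hx [Px Hmax]]]]].
  - left; intros x [].
  - destruct (classic (P a)) as [Pa|nPa].
    + right; exists a; repeat split; [now left|exact Pa|].
      intros y [<-|Hy] Py; [now left|exfalso; exact (IH y Hy Py)].
    + left; intros y [<-|Hy]; auto.
  - destruct (classic (P a /\ lt x a)) as [[Pa Hxa]|Hn].
    + right; exists a; repeat split; [now left|exact Pa|].
      intros y [<-|Hy] Py; [now left|right; exact (sto_le_lt_trans _ _ _ (Hmax y Hy Py) Hxa)].
    + right; exists x; repeat split; [now right|exact Px|].
      intros y [<-|Hy] Py; [|auto].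
      destruct (sto_total a x) as [|[|Hxa]]; auto. exfalso; auto.
Qed.

Lemma wf_least_element :
  well_founded lt -> inhabited A -> exists a0, forall a, a <> a0 -> lt a0 a.
Proof.
  intros Hwf [a].
  induction a as [a IH] using (well_founded_induction Hwf).
  destruct (classic (exists b, lt b a)) as [[b Hb]|Hmin]; [exact (IH b Hb)|].
  exists a; intros b Hba.
  destruct (sto_total a b) as [|[|Hb]]; [congruence|auto|].
  exfalso; eauto.
Qed.

End StrictTotalOrder.

Section Antilex.
Context {D : Type} (ltD : D -> D -> Prop).
Hypothesis HD : strict_total_order ltD.

Definition top_diff (f g : D -> Z) (d : D) : Prop :=
  f d <> g d /\ forall d', ltD d d' -> f d' = g d'.

Definition antilexZ (f g : D -> Z) : Prop := exists d, top_diff f g d /\ (f d < g d)%Z.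

Definition fin_suppZ (f : D -> Z) : Prop := exists l, forall d, f d <> 0%Z -> In d l.

Lemma top_diff_unique f g d d' : top_diff f g d -> top_diff f g d' -> d = d'.
Proof.
  intros [Hd Habove] [Hd' Habove'].
  destruct (sto_total HD d d') as [|[Hlt|Hlt]]; auto; exfalso; auto.
Qed.

Lemma antilexZ_irrefl f : ~ antilexZ f f.
Proof. intros [d [[Hd _] _]]; auto. Qed.

Lemma antilexZ_trans f g h : antilexZ f g -> antilexZ g h -> antilexZ f h.
Proof.
  intros [d1 [[N1 E1] L1]] [d2 [[N2 E2] L2]].
  destruct (sto_total HD d1 d2) as [<-|[H|H]].
  - exists d1; split; [split|]; [lia| |lia].
    intros d' Hd; rewrite E1, E2; auto.
  - exists d2; split; [split|];
      [rewrite E1 by exact H; exact N2| |rewrite E1 by exact H; exact L2].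
    intros d' Hd; rewrite E1, E2; auto; exact (sto_trans HD _ _ _ H Hd).
  - exists d1; split; [split|];
      [rewrite <- E2 by exact H; exact N1| |rewrite <- E2 by exact H; exact L1].
    intros d' Hd; rewrite E1, E2; auto; exact (sto_trans HD _ _ _ H Hd).
Qed.

Lemma antilexZ_asym f g : antilexZ f g -> ~ antilexZ g f.
Proof. intros H1 H2; exact (antilexZ_irrefl _ (antilexZ_trans _ _ _ H1 H2)). Qed.

Lemma top_diff_exists f g : fin_suppZ f -> fin_suppZ g -> f <> g -> exists d, top_diff f g d.
Proof.
  intros [lf Hf] [lg Hg] Hfg.
  assert (Hsupp : forall d, f d <> g d -> In d (lf ++ lg)).
  { intros d Hd; apply in_or_app.
    destruct (Z.eq_dec (f d) 0); [right; apply Hg|left; apply Hf]; lia. }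
  destruct (list_max_sat HD (fun d => f d <> g d) (lf ++ lg)) as [Hnone|[d [_ [Hd Hmax]]]].
  - exfalso; apply Hfg; apply functional_extensionality; intros d.
    apply NNPP; intros Hd; exact (Hnone d (Hsupp d Hd) Hd).
  - exists d; split; [exact Hd|].
    intros d' Hdd'; apply NNPP; intros Hd'.
    destruct (Hmax d' (Hsupp d' Hd') Hd') as [->|H];
      [exact (sto_irrefl HD _ Hdd')|exact (sto_asym HD _ _ H Hdd')].
Qed.

Lemma antilexZ_total f g : fin_suppZ f -> fin_suppZ g -> f = g \/ antilexZ f g \/ antilexZ g f.
Proof.
  intros Hf Hg.
  destruct (classic (f = g)) as [|Hfg]; [now left|right].
  destruct (top_diff_exists f g Hf Hg Hfg) as [d [Hd Habove]].
  destruct (Z_lt_le_dec (f d) (g d)).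
  - left; exists d; repeat split; auto.
  - right; exists d; repeat split; [congruence| |lia].
    intros d' Hd'; symmetry; auto.
Qed.

Lemma top_diff_chain f g h d1 d2 d :
  top_diff f g d1 -> (f d1 < g d1)%Z -> top_diff g h d2 -> (g d2 < h d2)%Z ->
  top_diff f h d -> ltD d1 d \/ ltD d2 d \/ (d1 = d /\ d2 = d).
Proof.
  intros [N1 E1] L1 [N2 E2] L2 [N E].
  assert (Hd1 : ~ ltD d d1).
  { intros Hdd1; pose proof (E d1 Hdd1) as Ed1.
    destruct (sto_total HD d2 d1) as [<-|[H|H]]; [lia|apply N1; rewrite E2; auto|].
    apply N2; rewrite <- E1 by exact H; apply E; exact (sto_trans HD _ _ _ Hdd1 H). }
  assert (Hd2 : ~ ltD d d2).
  { intros Hdd2; pose proof (E d2 Hdd2) as Ed2.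
    destruct (sto_total HD d1 d2) as [<-|[H|H]]; [lia|apply N2; rewrite <- E1; auto|].
    apply N1; rewrite E2 by exact H; apply E; exact (sto_trans HD _ _ _ Hdd2 H). }
  destruct (sto_total HD d1 d) as [<-|[H|H]]; [|now left|contradiction].
  destruct (sto_total HD d2 d1) as [<-|[H|H]]; [|now right; left|contradiction].
  now right; right.
Qed.

Lemma antilexZ_of_pointwise_le f g : fin_suppZ f -> fin_suppZ g ->
  (forall d, f d <= g d)%Z -> f <> g -> antilexZ f g.
Proof.
  intros Hf Hg Hle Hfg.
  destruct (antilexZ_total f g Hf Hg) as [|[|[d [_ Hd]]]]; [contradiction|assumption|].
  specialize (Hle d); lia.
Qed.

Definition bump (f : D -> Z) (p : D) (a : Z) : D -> Z :=
  fun d => if dec (ltD p d) then f d else if dec (d = p) then (f d + a)%Z else 0%Z.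

Lemma bump_above f p a d : ltD p d -> bump f p a d = f d.
Proof. intros H; unfold bump; destruct (dec (ltD p d)); tauto. Qed.

Lemma bump_at f p a : bump f p a p = (f p + a)%Z.
Proof.
  unfold bump; destruct (dec (ltD p p)) as [H|_]; [exfalso; exact (sto_irrefl HD _ H)|].
  destruct (dec (p = p)); tauto.
Qed.

Lemma bump_below f p a d : ~ ltD p d -> d <> p -> bump f p a d = 0%Z.
Proof. intros H1 H2; unfold bump; destruct (dec (ltD p d)), (dec (d = p)); tauto. Qed.

Lemma top_diff_bump f p a : a <> 0%Z -> top_diff f (bump f p a) p.
Proof.
  intros Ha; split; [rewrite bump_at; lia|].
  intros d Hd; rewrite bump_above; auto.
Qed.

Lemma bump_fin_suppZ f p a : fin_suppZ f -> fin_suppZ (bump f p a).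
Proof.
  intros [l Hl]; exists (p :: l); intros d Hd.
  destruct (dec (ltD p d)) as [H|H]; [rewrite bump_above in Hd by exact H; right; auto|].
  destruct (dec (d = p)) as [->|H']; [now left|rewrite bump_below in Hd; tauto].
Qed.

End Antilex.

Inductive bnd (X : Type) : Type := Bot | Pt (x : X) | Top.
Arguments Bot {X}.
Arguments Pt {X} x.
Arguments Top {X}.

Section Gaps.
Context {X : Type} (ltX : X -> X -> Prop).
Hypothesis HX : strict_total_order ltX.

Definition blt (a b : bnd X) : Prop :=
  match a, b with
  | Bot, Bot => False
  | Bot, _ => True
  | Pt x, Pt y => ltX x y
  | Pt _, Top => True
  | _, _ => False
  end.

Definition ble (a b : bnd X) : Prop := a = b \/ blt a b.

Lemma blt_sto : strict_total_order blt.
Proof.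
  split; [|split].
  - intros [|x|]; simpl; [tauto|apply (sto_irrefl HX)|tauto].
  - intros [|x|] [|y|] [|z|]; simpl; try tauto. apply (sto_trans HX).
  - intros [|x|] [|y|]; simpl; auto.
    destruct (sto_total HX x y) as [->|[|]]; auto.
Qed.

Lemma ble_Bot a : ble Bot a.
Proof. destruct a; [left|right|right]; simpl; auto. Qed.

Lemma ble_Top a : ble a Top.
Proof. destruct a; [right|right|left]; simpl; auto. Qed.

Definition in_bnd (F : list X) (a : bnd X) : Prop :=
  a = Bot \/ a = Top \/ exists x, In x F /\ a = Pt x.

Lemma in_bnd_cons F x a : in_bnd F a -> in_bnd (x :: F) a.
Proof. intros [|[|[y [Hy ->]]]]; [left|right; left|right; right; exists y]; simpl; auto. Qed.

Lemma in_bnd_uncons F x a : in_bnd (x :: F) a -> a <> Pt x -> in_bnd F a.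
Proof.
  intros [|[|[y [[<-|Hy] ->]]]] Ha; [left|right; left|contradiction|right; right; exists y]; auto.
Qed.

Definition gap (F : list X) (lo hi : bnd X) : Prop :=
  in_bnd F lo /\ in_bnd F hi /\ blt lo hi /\
  forall x, In x F -> ble (Pt x) lo \/ ble hi (Pt x).

Lemma gap_sides F lo hi a : gap F lo hi -> in_bnd F a -> ble a lo \/ ble hi a.
Proof.
  intros (_ & _ & _ & Hsides) [->|[->|[x [Hx ->]]]];
    [left; apply ble_Bot|right; apply ble_Top|auto].
Qed.

Lemma gap_below F lo hi a : gap F lo hi -> in_bnd F a -> blt a hi -> ble a lo.
Proof.
  intros Hgap Ha Hahi; destruct (gap_sides F lo hi a Hgap Ha) as [|Hle]; auto.
  exfalso; exact (sto_irrefl blt_sto _ (sto_le_lt_trans blt_sto _ _ _ Hle Hahi)).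
Qed.

Lemma gap_above F lo hi a : gap F lo hi -> in_bnd F a -> blt lo a -> ble hi a.
Proof.
  intros Hgap Ha Hloa; destruct (gap_sides F lo hi a Hgap Ha) as [Hle|]; auto.
  exfalso; exact (sto_irrefl blt_sto _ (sto_le_lt_trans blt_sto _ _ _ Hle Hloa)).
Qed.

Lemma gap_nil lo hi : gap [] lo hi <-> lo = Bot /\ hi = Top.
Proof.
  split.
  - intros ([->|[->|[? [[] _]]]] & [->|[->|[? [[] _]]]] & Hlt & _); simpl in Hlt; tauto.
  - intros [-> ->]; repeat split; [now left|now right; left|intros ? []].
Qed.

Section Insert.
Variables (F : list X) (lo hi : bnd X) (x : X).
Hypotheses (Hgap : gap F lo hi) (Hlox : blt lo (Pt x)) (Hxhi : blt (Pt x) hi).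

Lemma gap_cons_left : gap (x :: F) lo (Pt x).
Proof.
  destruct Hgap as (Hlo & _ & _ & Hsides).
  repeat split; [now apply in_bnd_cons|right; right; exists x; simpl; auto|exact Hlox|].
  intros y [<-|Hy]; [right; now left|].
  destruct (Hsides y Hy) as [|Hle]; [now left|right; right].
  exact (sto_lt_le_trans blt_sto _ _ _ Hxhi Hle).
Qed.

Lemma gap_cons_right : gap (x :: F) (Pt x) hi.
Proof.
  destruct Hgap as (_ & Hhi & _ & Hsides).
  repeat split; [right; right; exists x; simpl; auto|now apply in_bnd_cons|exact Hxhi|].
  intros y [<-|Hy]; [left; now left|].
  destruct (Hsides y Hy) as [Hle|]; [left; right|now right].
  exact (sto_le_lt_trans blt_sto _ _ _ Hle Hlox).
Qed.

Lemma gap_cons_inv lo' hi' : gap (x :: F) lo' hi' ->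
  (lo' = lo /\ hi' = Pt x) \/ (lo' = Pt x /\ hi' = hi) \/ gap F lo' hi'.
Proof.
  intros Hgap'; pose proof Hgap' as (Hlo' & Hhi' & Hlohi' & Hsides').
  assert (Hlo : in_bnd (x :: F) lo) by (apply in_bnd_cons; apply Hgap).
  assert (Hhi : in_bnd (x :: F) hi) by (apply in_bnd_cons; apply Hgap).
  destruct (classic (lo' = Pt x)) as [->|Hlo'x]; [|destruct (classic (hi' = Pt x)) as [->|Hhi'x]].
  - right; left; split; [reflexivity|].
    assert (Hhi'F : in_bnd F hi').
    { apply (in_bnd_uncons _ x); auto. intros ->; exact (sto_irrefl blt_sto _ Hlohi'). }
    apply (sto_le_antisym blt_sto).
    + destruct (gap_sides _ _ _ hi Hgap' Hhi) as [Hle|]; auto.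
      exfalso; exact (sto_irrefl blt_sto _ (sto_le_lt_trans blt_sto _ _ _ Hle Hxhi)).
    + exact (gap_above F lo hi hi' Hgap Hhi'F (sto_trans blt_sto _ _ _ Hlox Hlohi')).
  - left; split; [|reflexivity].
    assert (Hlo'F : in_bnd F lo') by (apply (in_bnd_uncons _ x); auto).
    apply (sto_le_antisym blt_sto).
    + exact (gap_below F lo hi lo' Hgap Hlo'F (sto_trans blt_sto _ _ _ Hlohi' Hxhi)).
    + destruct (gap_sides _ _ _ lo Hgap' Hlo) as [|Hle]; auto.
      exfalso; exact (sto_irrefl blt_sto _ (sto_le_lt_trans blt_sto _ _ _ Hle Hlox)).
  - right; right; repeat split;
      [exact (in_bnd_uncons F x _ Hlo' Hlo'x)|exact (in_bnd_uncons F x _ Hhi' Hhi'x)|exact Hlohi'|].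
    intros y Hy; apply Hsides'; now right.
Qed.

End Insert.

Lemma pts_eq (F : list X) (a : X) (H H' : In a F) : exist (fun y => In y F) a H = exist _ a H'.
Proof. f_equal; apply proof_irrelevance. Qed.

Definition gap_ext (F : list X) (lo hi : bnd X) (a b : option (pts F)) : Prop :=
  match a, b with
  | Some a, Some b => ltX (proj1_sig a) (proj1_sig b)
  | Some a, None => blt (Pt (proj1_sig a)) hi
  | None, Some b => blt lo (Pt (proj1_sig b))
  | None, None => False
  end.

Lemma in_bnd_pts F (p : pts F) : in_bnd F (Pt (proj1_sig p)).
Proof. destruct p as [a Ha]; right; right; exists a; auto. Qed.

Lemma gap_ext_prime F lo hi : gap F lo hi -> prime_ext ltX F (gap_ext F lo hi).
Proof.
  intros Hgap; pose proof Hgap as (_ & _ & Hlohi & _).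
  assert (Hbelow := fun p => gap_below F lo hi _ Hgap (in_bnd_pts F p)).
  assert (Habove := fun p => gap_above F lo hi _ Hgap (in_bnd_pts F p)).
  split; [split; [|split]|intros a b; simpl; tauto].
  - intros [a|]; simpl; [apply (sto_irrefl HX)|tauto].
  - intros [a|] [b|] [c|]; simpl; intros Hab Hbc; try contradiction.
    + exact (sto_trans HX _ _ _ Hab Hbc).
    + exact (sto_trans blt_sto (Pt _) (Pt _) _ Hab Hbc).
    + change (blt (Pt (proj1_sig a)) (Pt (proj1_sig c))).
      exact (sto_le_lt_trans blt_sto _ _ _ (Hbelow a Hab)
               (sto_lt_le_trans blt_sto _ _ _ Hlohi (Habove c Hbc))).
    + exact (sto_trans blt_sto _ (Pt _) (Pt _) Hab Hbc).
    + exact (sto_irrefl blt_sto _ (sto_le_lt_trans blt_sto _ _ _ (Hbelow b Hbc) Hab)).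
  - intros [[a Ha]|] [[b Hb]|]; simpl; auto.
    + destruct (sto_total HX a b) as [<-|[|]]; auto. left; now rewrite (pts_eq F a Ha Hb).
    + destruct (gap_sides F lo hi _ Hgap (in_bnd_pts F (exist _ a Ha))) as [Hle|Hle].
      * right; left; exact (sto_le_lt_trans blt_sto _ _ _ Hle Hlohi).
      * right; right; exact (sto_lt_le_trans blt_sto _ _ _ Hlohi Hle).
    + destruct (gap_sides F lo hi _ Hgap (in_bnd_pts F (exist _ b Hb))) as [Hle|Hle].
      * right; right; exact (sto_le_lt_trans blt_sto _ _ _ Hle Hlohi).
      * right; left; exact (sto_lt_le_trans blt_sto _ _ _ Hlohi Hle).
Qed.

Lemma gap_ext_realizes F lo hi x : gap F lo hi -> realizes ltX F (gap_ext F lo hi) x ->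
  blt lo (Pt x) /\ blt (Pt x) hi.
Proof.
  intros (Hlo & Hhi & Hlohi & _) [_ Hreal]; split.
  - destruct Hlo as [->|[->|[a [Ha ->]]]]; [exact I|contradiction|].
    apply (proj1 (proj2 (Hreal (exist _ a Ha)))); exact Hlohi.
  - destruct Hhi as [->|[->|[a [Ha ->]]]]; [destruct lo; contradiction|exact I|].
    apply (proj1 (proj1 (Hreal (exist _ a Ha)))); exact Hlohi.
Qed.

Lemma exists_max_bound (F : list X) (P : X -> Prop) :
  exists lo, (lo = Bot \/ exists a, In a F /\ P a /\ lo = Pt a) /\
             forall a, In a F -> P a -> ble (Pt a) lo.
Proof.
  destruct (list_max_sat HX P F) as [Hnone|[a [Ha [Pa Hmax]]]].
  - exists Bot; split; [now left|]. intros a Ha Pa; exfalso; exact (Hnone a Ha Pa).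
  - exists (Pt a); split; [right; exists a; auto|].
    intros b Hb Pb; destruct (Hmax b Hb Pb) as [->|]; [now left|now right].
Qed.

Lemma exists_min_bound (F : list X) (P : X -> Prop) :
  exists hi, (hi = Top \/ exists a, In a F /\ P a /\ hi = Pt a) /\
             forall a, In a F -> P a -> ble hi (Pt a).
Proof.
  destruct (list_max_sat (sto_flip HX) P F) as [Hnone|[a [Ha [Pa Hmin]]]].
  - exists Top; split; [now left|]. intros a Ha Pa; exfalso; exact (Hnone a Ha Pa).
  - exists (Pt a); split; [right; exists a; auto|].
    intros b Hb Pb; destruct (Hmin b Hb Pb) as [->|]; [now left|now right].
Qed.

Definition below_new (F : list X) (R : option (pts F) -> option (pts F) -> Prop) (a : X) :
  Prop := exists H : In a F, R (Some (exist _ a H)) None.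

Lemma prime_ext_side F R (p : pts F) : prime_ext ltX F R ->
  (R (Some p) None <-> below_new F R (proj1_sig p)) /\
  (R None (Some p) <-> ~ below_new F R (proj1_sig p)).
Proof.
  intros [HR _]; destruct p as [a Ha]; simpl.
  assert (Hb : below_new F R a <-> R (Some (exist _ a Ha)) None).
  { split; [intros [Ha' H]; now rewrite (pts_eq F a Ha Ha')|intros H; now exists Ha]. }
  rewrite Hb; split; [tauto|split].
  - intros H1 H2; exact (sto_asym HR _ _ H1 H2).
  - intros H; destruct (sto_total HR (Some (exist _ a Ha)) None) as [[=]|[|]]; tauto.
Qed.

Lemma prime_ext_gap F R : prime_ext ltX F R ->
  exists lo hi, gap F lo hi /\
    forall x, blt lo (Pt x) -> blt (Pt x) hi -> realizes ltX F R x.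
Proof.
  intros HRext; pose proof HRext as [HR Hres].
  pose proof (fun p => prime_ext_side F R p HRext) as Hside.
  set (below := below_new F R) in Hside.
  destruct (exists_max_bound F below) as [lo [Hlo Hlo_max]].
  destruct (exists_min_bound F (fun a => ~ below a)) as [hi [Hhi Hhi_min]].
  assert (Hlohi : blt lo hi).
  { destruct Hlo as [->|[a [Ha [Pa ->]]]], Hhi as [->|[b [Hb [Pb ->]]]]; simpl; auto.
    apply (Hres (exist _ a Ha) (exist _ b Hb)), (sto_trans HR _ None);
      [apply (Hside (exist _ a Ha))|apply (Hside (exist _ b Hb))]; assumption. }
  exists lo, hi; split.
  { repeat split; [|destruct Hhi as [->|[b [Hb [_ ->]]]]|exact Hlohi|].
    - destruct Hlo as [->|[a [Ha [_ ->]]]]; [now left|right; right; now exists a].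
    - now right; left.
    - right; right; now exists b.
    - intros a Ha; destruct (classic (below a)); [left|right]; auto. }
  intros x Hlox Hxhi.
  assert (Hbelow : forall a, In a F -> below a -> ltX a x)
    by (intros a Ha Pa; exact (sto_le_lt_trans blt_sto (Pt a) _ (Pt x) (Hlo_max a Ha Pa) Hlox)).
  assert (Habove : forall a, In a F -> ~ below a -> ltX x a)
    by (intros a Ha Pa; exact (sto_lt_le_trans blt_sto (Pt x) _ (Pt a) Hxhi (Hhi_min a Ha Pa))).
  split.
  - intros Hx; destruct (classic (below x)) as [Px|Px];
      [exact (sto_irrefl HX _ (Hbelow x Hx Px))|exact (sto_irrefl HX _ (Habove x Hx Px))].
  - intros [a Ha]; rewrite (proj1 (Hside (exist _ a Ha))), (proj2 (Hside (exist _ a Ha))); simpl.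
    destruct (classic (below a)) as [Pa|Pa]; split; split; intros H; try tauto.
    + exfalso; exact (sto_asym HX _ _ H (Hbelow a Ha Pa)).
    + exact (Hbelow a Ha Pa).
    + exact (Habove a Ha Pa).
    + exfalso; exact (sto_asym HX _ _ H (Habove a Ha Pa)).
Qed.

Section RankByGaps.
Context {W : Type} (ltW : W -> W -> Prop).
Hypotheses (HW : strict_total_order ltW) (HWwf : well_founded ltW).
Hypothesis HWsucc : forall r, exists s, succ_of ltW r s.
Variable rho : bnd X -> bnd X -> W.
Hypothesis rho_split_drops : forall lo hi x, blt lo (Pt x) -> blt (Pt x) hi ->
  ltW (rho lo (Pt x)) (rho lo hi) \/ ltW (rho (Pt x) hi) (rho lo hi).
Hypothesis rho_split_keeps : forall lo hi u, blt lo hi -> ltW u (rho lo hi) ->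
  exists x, blt lo (Pt x) /\ blt (Pt x) hi /\
    ~ ltW (rho lo (Pt x)) u /\ ~ ltW (rho (Pt x) hi) u.

Definition gaps_ge (F : list X) (w : W) : Prop :=
  forall lo hi, gap F lo hi -> ~ ltW (rho lo hi) w.

Lemma gaps_ge_mono F w v : gaps_ge F w -> ltW v w -> gaps_ge F v.
Proof. intros Hw Hvw lo hi Hgap Hlt; exact (Hw lo hi Hgap (sto_trans HW _ _ _ Hlt Hvw)). Qed.

Lemma gaps_ge_cons F lo hi x v : gaps_ge F v -> gap F lo hi ->
  blt lo (Pt x) -> blt (Pt x) hi ->
  ~ ltW (rho lo (Pt x)) v -> ~ ltW (rho (Pt x) hi) v -> gaps_ge (x :: F) v.
Proof.
  intros Hv Hgap Hlox Hxhi Hleft Hright lo' hi' Hgap'.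
  destruct (gap_cons_inv F lo hi x Hgap Hlox Hxhi lo' hi' Hgap')
    as [[-> ->]|[[-> ->]|Hgap'F]]; auto.
Qed.

Lemma rkge_of_gaps_ge w : forall F, gaps_ge F w -> rkge ltX ltW F w.
Proof.
  induction w as [w IH] using (well_founded_induction HWwf); intros F Hw.
  constructor.
  - intros v [Hvw _] R HR.
    destruct (prime_ext_gap F R HR) as [lo [hi [Hgap Hreal]]].
    assert (Hv : ltW v (rho lo hi)).
    { destruct (sto_total HW (rho lo hi) w) as [<-|[Hlt|Hlt]];
        [exact Hvw|exfalso; exact (Hw lo hi Hgap Hlt)|exact (sto_trans HW _ _ _ Hvw Hlt)]. }
    destruct (rho_split_keeps lo hi v (proj1 (proj2 (proj2 Hgap))) Hv)
      as [x (Hlox & Hxhi & Hleft & Hright)].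
    exists x; split; [exact (Hreal x Hlox Hxhi)|].
    apply (IH v Hvw).
    exact (gaps_ge_cons F lo hi x v (gaps_ge_mono F w v Hw Hvw) Hgap Hlox Hxhi Hleft Hright).
  - intros _ v Hvw; exact (IH v Hvw F (gaps_ge_mono F w v Hw Hvw)).
Qed.

Lemma gaps_ge_of_rkge w : forall F, rkge ltX ltW F w -> gaps_ge F w.
Proof.
  induction w as [w IH] using (well_founded_induction HWwf).
  intros F Hrk lo hi Hgap Hlt; destruct Hrk as [F w Hsucc Hlim].
  destruct (classic (exists u, succ_of ltW u w)) as [[u [Huw Hnone]]|Hnsucc].
  - pose proof (gap_ext_prime F lo hi Hgap) as HR.
    destruct (Hsucc u (conj Huw Hnone) _ HR) as [x [Hreal Hrk]].
    destruct (gap_ext_realizes F lo hi x Hgap Hreal) as [Hlox Hxhi].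
    pose proof (IH u Huw (x :: F) Hrk) as Hu.
    assert (Hsmall : forall r, ltW r (rho lo hi) -> ltW r u).
    { intros r Hr; destruct (sto_total HW r u) as [<-|[|Hur]]; auto; exfalso.
      - exact (Hnone (rho lo hi) (conj Hr Hlt)).
      - exact (Hnone (rho lo hi) (conj (sto_trans HW _ _ _ Hur Hr) Hlt)). }
    destruct (rho_split_drops lo hi x Hlox Hxhi) as [Hr|Hr].
    + exact (Hu lo (Pt x) (gap_cons_left F lo hi x Hgap Hlox Hxhi) (Hsmall _ Hr)).
    + exact (Hu (Pt x) hi (gap_cons_right F lo hi x Hgap Hlox Hxhi) (Hsmall _ Hr)).
  - destruct (HWsucc (rho lo hi)) as [s [Hrs Hnone]].
    assert (Hsw : ltW s w).
    { destruct (sto_total HW s w) as [<-|[|Hws]]; auto; exfalso.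
      - apply Hnsucc; exists (rho lo hi); split; auto.
      - exact (Hnone w (conj Hlt Hws)). }
    apply (IH s Hsw F (Hlim (conj (ex_intro _ _ Hlt) Hnsucc) s Hsw) lo hi Hgap Hrs).
Qed.

Theorem rank_eq_gap_rank : rank_eq ltX ltW (rho Bot Top).
Proof.
  assert (Hnil : gap [] Bot Top) by now apply gap_nil.
  split.
  - apply rkge_of_gaps_ge; intros lo hi Hgap; apply gap_nil in Hgap as [-> ->].
    apply (sto_irrefl HW).
  - intros v Hv Hrk; exact (gaps_ge_of_rkge v [] Hrk Bot Top Hnil Hv).
Qed.

End RankByGaps.

End Gaps.

Section RankOrdinal.
Context {T : Type} (ltT : T -> T -> Prop).
Hypothesis Hord : strict_total_order ltT.

(* [option T] is the ordinal [β + 1], with [None] standing for [β]. *)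
Definition olt (a b : option T) : Prop :=
  match a, b with
  | Some a, Some b => ltT a b
  | Some _, None => True
  | None, _ => False
  end.

Lemma olt_sto : strict_total_order olt.
Proof.
  split; [|split].
  - intros [a|]; simpl; [apply (sto_irrefl Hord)|tauto].
  - intros [a|] [b|] [c|]; simpl; try tauto; apply (sto_trans Hord).
  - intros [a|] [b|]; simpl; auto.
    destruct (sto_total Hord a b) as [->|[|]]; auto.
Qed.

Notation owlt := (ow_lt ltT).

Definition ow_pos (d : option T) (k : nat) : OW T :=
  match d with Some s => inl (s, k) | None => inr k end.

Lemma ow_pos_surj u : exists d k, u = ow_pos d k.
Proof. destruct u as [[s k]|k]; [exists (Some s), k|exists None, k]; reflexivity. Qed.

Lemma ow_pos_lt d k d' k' : owlt (ow_pos d k) (ow_pos d' k') <-> olt d d' \/ (d = d' /\ k < k').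
Proof.
  destruct d as [s|], d' as [s'|]; simpl.
  - split; intros [|[Hs Hk]]; auto; right; split; congruence.
  - tauto.
  - split; [tauto|intros [[]|[[=] _]]].
  - split; [intros; right; auto|intros [[]|[_ ?]]; auto].
Qed.

Lemma owlt_sto : strict_total_order owlt.
Proof.
  split; [|split].
  - intros u; destruct (ow_pos_surj u) as (d & k & ->); rewrite ow_pos_lt.
    intros [H|[_ H]]; [exact (sto_irrefl olt_sto _ H)|lia].
  - intros u v w; destruct (ow_pos_surj u) as (d1 & k1 & ->), (ow_pos_surj v) as (d2 & k2 & ->),
      (ow_pos_surj w) as (d3 & k3 & ->); rewrite !ow_pos_lt.
    intros [H1|[<- H1]] [H2|[<- H2]]; [left; exact (sto_trans olt_sto _ _ _ H1 H2)|now left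
      |now left|right; split; [reflexivity|lia]].
  - intros u v; destruct (ow_pos_surj u) as (d1 & k1 & ->), (ow_pos_surj v) as (d2 & k2 & ->);
      rewrite !ow_pos_lt.
    destruct (sto_total olt_sto d1 d2) as [<-|[|]]; [|tauto|tauto].
    destruct (Nat.lt_trichotomy k1 k2) as [|[<-|]]; tauto.
Qed.

Lemma owlt_wf : well_founded ltT -> well_founded owlt.
Proof.
  intros Hwf.
  assert (Hinl : forall t n, Acc owlt (inl (t, n))).
  { intros t; induction t as [t IHt] using (well_founded_induction Hwf).
    intros n; induction n as [n IHn] using (well_founded_induction lt_wf).
    constructor; intros [[t' n']|k] H; simpl in H; [|contradiction].
    destruct H as [H|[-> H]]; [apply IHt|apply IHn]; exact H. }
  intros [[t n]|k]; [apply Hinl|].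
  induction k as [k IHk] using (well_founded_induction lt_wf).
  constructor; intros [[t' n']|k'] H; [apply Hinl|exact (IHk k' H)].
Qed.

Lemma owlt_succ u : exists s, succ_of owlt u s.
Proof.
  destruct (ow_pos_surj u) as (d & k & ->); exists (ow_pos d (S k)).
  split; [apply ow_pos_lt; right; auto|].
  intros v; destruct (ow_pos_surj v) as (e & j & ->); rewrite !ow_pos_lt.
  intros [[H1|[E1 H1]] [H2|[E2 H2]]]; subst.
  - exact (sto_asym olt_sto _ _ H1 H2).
  - exact (sto_irrefl olt_sto _ H1).
  - exact (sto_irrefl olt_sto _ H2).
  - lia.
Qed.

Definition rank_at (d : option T) (c : Z) : OW T := ow_pos d (Nat.log2 (Z.to_nat c)).

Definition lex_rank (f g : option T -> Z) : OW T :=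
  epsilon (inhabits (inr 0)) (fun r => exists d, top_diff olt f g d /\ r = rank_at d (g d - f d)).

Lemma lex_rank_eq f g d : top_diff olt f g d -> lex_rank f g = rank_at d (g d - f d).
Proof.
  intros Hd; unfold lex_rank.
  destruct (epsilon_spec (inhabits (inr 0))
              (fun r => exists d, top_diff olt f g d /\ r = rank_at d (g d - f d))
              (ex_intro _ _ (ex_intro _ d (conj Hd eq_refl)))) as [d' [Hd' ->]].
  now rewrite (top_diff_unique _ olt_sto _ _ _ _ Hd' Hd).
Qed.

(* With a common top difference the two differences add up, and [log2] of a sum
   exceeds [log2] of one of the summands. *)
Lemma lex_rank_split f g h : antilexZ olt f g -> antilexZ olt g h ->
  owlt (lex_rank f g) (lex_rank f h) \/ owlt (lex_rank g h) (lex_rank f h).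
Proof.
  intros Hfg Hgh.
  destruct (antilexZ_trans _ olt_sto _ _ _ Hfg Hgh) as [d [Hd _]].
  destruct Hfg as [d1 [Hd1 L1]], Hgh as [d2 [Hd2 L2]].
  rewrite (lex_rank_eq _ _ _ Hd1), (lex_rank_eq _ _ _ Hd2), (lex_rank_eq _ _ _ Hd).
  unfold rank_at; rewrite !ow_pos_lt.
  destruct (top_diff_chain _ olt_sto f g h d1 d2 d Hd1 L1 Hd2 L2 Hd) as [H|[H|[-> ->]]];
    [now left; left|now right; left|].
  set (a := Z.to_nat (g d - f d)); set (b := Z.to_nat (h d - g d)).
  replace (Z.to_nat (h d - f d)) with (a + b) by (unfold a, b; lia).
  pose proof (Nat.add_log2_lt a b ltac:(unfold a; lia) ltac:(unfold b; lia)).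
  destruct (Nat.lt_ge_cases (Nat.log2 a) (Nat.log2 (a + b))); [left|right]; right;
    (split; [reflexivity|lia]).
Qed.

Lemma lex_rank_bump f g u : antilexZ olt f g -> owlt u (lex_rank f g) ->
  exists p a, (0 < a)%Z /\ antilexZ olt f (bump olt f p a) /\ antilexZ olt (bump olt f p a) g /\
    lex_rank f (bump olt f p a) = u /\ ~ owlt (lex_rank (bump olt f p a) g) u.
Proof.
  (* With [u = ω·p + k], adding [2^k] to [f] at [p] makes a left part of rank exactly [u];
     the right part keeps the top difference of [f < g], or at least half of it. *)
  intros [d [Hd Lfg]] Hu.
  rewrite (lex_rank_eq _ _ _ Hd) in Hu.
  destruct (ow_pos_surj u) as (p & k & ->).
  unfold rank_at in Hu; rewrite ow_pos_lt in Hu.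
  set (a := Z.of_nat (2 ^ k)).
  assert (Ha : (0 < a)%Z) by (unfold a; pose proof (Nat.pow_nonzero 2 k); lia).
  pose proof (bump_above olt f p a) as Habove.
  pose proof (bump_at _ olt_sto f p a) as Hat.
  assert (Hfe : top_diff olt f (bump olt f p a) p) by (apply (top_diff_bump _ olt_sto); lia).
  assert (Hrank_fe : lex_rank f (bump olt f p a) = ow_pos p k).
  { rewrite (lex_rank_eq _ _ _ Hfe), Hat; unfold rank_at, a; f_equal.
    replace (f p + Z.of_nat (2 ^ k) - f p)%Z with (Z.of_nat (2 ^ k)) by lia.
    rewrite Nat2Z.id; apply Nat.log2_pow2; lia. }
  exists p, a; split; [exact Ha|split; [exists p; split; [exact Hfe|lia]|]].
  destruct Hd as [Nd Ed], Hu as [Hpd|[<- Hk]].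
  - assert (Heg : top_diff olt (bump olt f p a) g d).
    { split; [rewrite Habove; auto|].
      intros d' Hd'; rewrite Habove by exact (sto_trans olt_sto _ _ _ Hpd Hd'); auto. }
    split; [exists d; split; [exact Heg|rewrite Habove; auto]|split; [exact Hrank_fe|]].
    rewrite (lex_rank_eq _ _ _ Heg); unfold rank_at; rewrite ow_pos_lt.
    intros [H|[-> _]]; [exact (sto_asym olt_sto _ _ H Hpd)|exact (sto_irrefl olt_sto _ Hpd)].
  - apply Nat.log2_le_pow2 in Hk; [rewrite Nat.pow_succ_r' in Hk|lia].
    assert (Heg : top_diff olt (bump olt f p a) g p).
    { split; [rewrite Hat; unfold a; lia|].
      intros d' Hd'; rewrite Habove; auto. }
    split; [exists p; split; [exact Heg|rewrite Hat; unfold a; lia]|split; [exact Hrank_fe|]].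
    rewrite (lex_rank_eq _ _ _ Heg), Hat; unfold rank_at; rewrite ow_pos_lt.
    intros [H|[_ H]]; [exact (sto_irrefl olt_sto _ H)|].
    assert (Hge : 2 ^ k <= Z.to_nat (g p - (f p + a))) by (unfold a; lia).
    apply Nat.log2_le_pow2 in Hge; lia.
Qed.

End RankOrdinal.

Section OmegaPower.
Context {T : Type} (ltT : T -> T -> Prop).
Hypotheses (Hord : strict_total_order ltT) (Hwf : well_founded ltT).
Variables (m : nat) (t0 : T).
Hypotheses (Hm : 1 <= m) (Ht0 : forall t, t <> t0 -> ltT t0 t).

Notation X := (OPM T m).
Notation ltX := (opm_lt ltT m).
Notation olt := (olt ltT).
Notation owlt := (ow_lt ltT).

Definition emb (x : X) : option T -> Z :=
  fun d => match d with
           | Some t => Z.of_nat (snd (proj1_sig x) t)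
           | None => Z.of_nat (fst (proj1_sig x))
           end.

Lemma emb_lt x y : ltX x y <-> antilexZ olt (emb x) (emb y).
Proof.
  destruct x as [[i f] [Hi Hf]], y as [[j g] [Hj Hg]]; unfold opm_lt, emb; simpl.
  split.
  - intros [H|[-> [t [Ht Habove]]]].
    + exists None; split; [split|]; [lia|intros d' []|lia].
    + exists (Some t); split; [split|]; [lia| |lia].
      intros [s|] Hs; simpl in Hs; [rewrite Habove; auto|auto].
  - intros [[t|] [[N E] L]]; simpl in *; [right|left; lia].
    assert (i = j) by (specialize (E None I); cbn in E; lia).
    split; [assumption|exists t; split; [lia|]].
    intros s Hs; specialize (E (Some s) Hs); cbn in E; lia.
Qed.

Lemma emb_inj x y : emb x = emb y -> x = y.
Proof.
  destruct x as [[i f] Hx], y as [[j g] Hy]; intros E.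
  assert (i = j) by (pose proof (f_equal (fun e => e None) E) as Ei; simpl in Ei; lia).
  assert (f = g).
  { apply functional_extensionality; intros t.
    pose proof (f_equal (fun e => e (Some t)) E) as Et; simpl in Et; lia. }
  subst; f_equal; apply proof_irrelevance.
Qed.

Lemma emb_fin_suppZ x : fin_suppZ (emb x).
Proof.
  destruct x as [[i f] [Hi [l Hl]]]; exists (None :: map Some l).
  intros [t|] H; simpl in *; [right; apply in_map, Hl; lia|now left].
Qed.

Lemma emb_surj e : (forall d, 0 <= e d)%Z -> (e None < Z.of_nat m)%Z -> fin_suppZ e ->
  exists x, emb x = e.
Proof.
  intros Hpos HNone [l Hl].
  assert (Hfs : fin_supp (fun t => Z.to_nat (e (Some t)))).
  { exists (flat_map (fun d => match d with Some t => [t] | None => [] end) l).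
    intros t Ht; apply in_flat_map; exists (Some t); split; [apply Hl; lia|now left]. }
  assert (Hlt : Z.to_nat (e None) < m) by lia.
  exists (exist _ (Z.to_nat (e None), fun t => Z.to_nat (e (Some t))) (conj Hlt Hfs)).
  apply functional_extensionality; intros d; specialize (Hpos d); destruct d; simpl; lia.
Qed.

Lemma ltX_sto : strict_total_order ltX.
Proof.
  split; [|split].
  - intros x H; apply emb_lt in H; exact (antilexZ_irrefl _ _ H).
  - intros x y z Hxy Hyz; apply emb_lt; apply emb_lt in Hxy, Hyz.
    exact (antilexZ_trans _ (olt_sto _ Hord) _ _ _ Hxy Hyz).
  - intros x y.
    destruct (antilexZ_total _ (olt_sto _ Hord) (emb x) (emb y)
                (emb_fin_suppZ x) (emb_fin_suppZ y)) as [E|[H|H]];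
      [left; exact (emb_inj x y E)|right; left|right; right]; apply emb_lt; exact H.
Qed.

(* [Bot] is [-1] at the least coordinate [t0], hence lies just below the least point of [X];
   [Top] is the would-be first point [(m, 0)] of a next copy. *)
Definition coord (a : bnd X) : option T -> Z :=
  match a with
  | Bot => fun d => if dec (d = Some t0) then (-1)%Z else 0%Z
  | Pt x => emb x
  | Top => fun d => if dec (d = None) then Z.of_nat m else 0%Z
  end.

Lemma coord_fin_suppZ a : fin_suppZ (coord a).
Proof.
  destruct a as [|x|]; [exists [Some t0]|apply emb_fin_suppZ|exists [None]]; intros d; simpl;
    destruct (dec _) as [->|]; intros; [now left|lia|now left|lia].
Qed.

Lemma coord_nonneg a d : a <> Bot -> (0 <= coord a d)%Z.
Proof. destruct a as [|x|]; simpl; [congruence|destruct d; simpl; lia|destruct (dec _); lia]. Qed.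

Lemma coord_lower a d : (-1 <= coord a d)%Z /\ (d <> Some t0 -> 0 <= coord a d)%Z.
Proof.
  destruct a as [|x|].
  - simpl; destruct (dec _); split; intros; (congruence || lia).
  - pose proof (coord_nonneg (Pt x) d ltac:(discriminate)); split; intros; lia.
  - pose proof (coord_nonneg Top d ltac:(discriminate)); split; intros; lia.
Qed.

Lemma coord_lt a b : blt ltX a b -> antilexZ olt (coord a) (coord b).
Proof.
  intros Hab; destruct a as [|x|].
  - assert (Hb : b <> Bot) by (intros ->; exact Hab).
    apply (antilexZ_of_pointwise_le _ (olt_sto _ Hord)); [apply coord_fin_suppZ..| |].
    + intros d; pose proof (coord_nonneg b d Hb); simpl; destruct (dec _); lia.
    + intros E; pose proof (coord_nonneg b (Some t0) Hb) as Ht0b; rewrite <- E in Ht0b.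
      simpl in Ht0b; destruct (dec _); [lia|congruence].
  - destruct b as [|y|]; [contradiction|apply emb_lt; exact Hab|].
    destruct x as [[i f] [Hi Hf]]; simpl in Hi.
    exists None; simpl; destruct (dec _) as [_|]; [|congruence].
    split; [split; [simpl; destruct (dec _); [lia|congruence]|intros d' []]|lia].
  - destruct b; contradiction.
Qed.

Lemma coord_lt_iff a b : blt ltX a b <-> antilexZ olt (coord a) (coord b).
Proof.
  split; [apply coord_lt|intros H].
  destruct (sto_total (blt_sto _ ltX_sto) a b) as [<-|[|Hba]]; [|assumption|];
    exfalso; [exact (antilexZ_irrefl _ _ H)|].
  exact (antilexZ_asym _ (olt_sto _ Hord) _ _ H (coord_lt _ _ Hba)).
Qed.

Lemma emb_surj_below e b : (forall d, 0 <= e d)%Z -> fin_suppZ e -> antilexZ olt e (coord b) ->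
  exists x, emb x = e.
Proof.
  intros Hpos Hfs [d [[_ Ed] Ld]]; apply emb_surj; auto.
  assert (HNone : (e None <= coord b None)%Z) by (destruct d; [rewrite (Ed None I)|]; lia).
  destruct b as [|[[i f] [Hi Hf]]|]; simpl in HNone, Ld.
  - destruct (dec (None = Some t0)) as [[=]|_]; lia.
  - simpl in Hi; lia.
  - destruct d as [s|]; [destruct (dec (Some s = None)) as [[=]|_]|].
    + specialize (Hpos (Some s)); lia.
    + destruct (dec (None = None)) as [_|]; [lia|congruence].
Qed.

Definition gap_rank (lo hi : bnd X) : OW T := lex_rank ltT (coord lo) (coord hi).

Lemma gap_rank_split_drops lo hi x : blt ltX lo (Pt x) -> blt ltX (Pt x) hi ->
  owlt (gap_rank lo (Pt x)) (gap_rank lo hi) \/ owlt (gap_rank (Pt x) hi) (gap_rank lo hi).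
Proof. intros H1 H2; exact (lex_rank_split _ Hord _ _ _ (coord_lt _ _ H1) (coord_lt _ _ H2)). Qed.

Lemma bump_coord_nonneg lo p a : (1 <= a)%Z -> forall d, (0 <= bump olt (coord lo) p a d)%Z.
Proof.
  intros Ha d.
  destruct (dec (olt p d)) as [Hpd|Hpd]; [rewrite bump_above by exact Hpd|].
  - apply (coord_lower lo d); intros ->.
    destruct p as [s|]; simpl in Hpd; [|contradiction].
    destruct (classic (s = t0)) as [->|Hs];
      [exact (sto_irrefl Hord _ Hpd)|exact (sto_asym Hord _ _ Hpd (Ht0 s Hs))].
  - destruct (dec (d = p)) as [->|Hdp].
    + rewrite (bump_at _ (olt_sto _ Hord)); pose proof (proj1 (coord_lower lo p)); lia.
    + rewrite bump_below by assumption; lia.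
Qed.

Lemma gap_rank_split_keeps lo hi u : blt ltX lo hi -> owlt u (gap_rank lo hi) ->
  exists x, blt ltX lo (Pt x) /\ blt ltX (Pt x) hi /\
    ~ owlt (gap_rank lo (Pt x)) u /\ ~ owlt (gap_rank (Pt x) hi) u.
Proof.
  intros Hlohi Hu.
  destruct (lex_rank_bump _ Hord _ _ _ (coord_lt _ _ Hlohi) Hu)
    as (p & a & Ha & Hlo & Hhi & Hleft & Hright).
  destruct (emb_surj_below (bump olt (coord lo) p a) hi) as [x Hx];
    [apply bump_coord_nonneg; lia|apply bump_fin_suppZ, coord_fin_suppZ|exact Hhi|].
  exists x; unfold gap_rank; rewrite !coord_lt_iff; change (coord (Pt x)) with (emb x); rewrite Hx.
  repeat split; auto. rewrite Hleft; apply (sto_irrefl (owlt_sto _ Hord)).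
Qed.

Lemma gap_rank_Bot_Top : gap_rank Bot Top = inr (Nat.log2 m).
Proof.
  assert (Hbot : coord Bot None = 0%Z) by (simpl; destruct (dec _); [discriminate|reflexivity]).
  assert (Htop : coord Top None = Z.of_nat m)
    by (simpl; destruct (dec _); [reflexivity|congruence]).
  unfold gap_rank; rewrite (lex_rank_eq _ Hord _ _ None).
  - rewrite Hbot, Htop; unfold rank_at; simpl; do 2 f_equal; lia.
  - split; [rewrite Hbot, Htop; lia|intros d' []].
Qed.

Theorem rank_eq_omega_power : rank_eq ltX owlt (inr (Nat.log2 m)).
Proof.
  rewrite <- gap_rank_Bot_Top.
  exact (rank_eq_gap_rank ltX ltX_sto owlt (owlt_sto _ Hord) (owlt_wf _ Hwf) (owlt_succ _ Hord)
           gap_rank gap_rank_split_drops gap_rank_split_keeps).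
Qed.

End OmegaPower.

Theorem theorem6p12 (T : Type) (ltT : T -> T -> Prop)
  (Hord : strict_total_order ltT) (Hwf : well_founded ltT)
  (Hcount : countable_type T) (Hbeta : inhabited T)
  (m : nat) (Hm : 1 <= m) :
  rank_eq (opm_lt ltT m) (ow_lt ltT) (inr (Nat.log2 m)).
Proof.
  destruct (wf_least_element Hord Hwf Hbeta) as [t0 Ht0].
  exact (rank_eq_omega_power ltT Hord Hwf m t0 Hm Ht0).
Qed.
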